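(* Let $\theta_0=[\mathrm{vec}(A_0)^T,\mathrm{vec}(M_0)^T]^T$ with $A_0\in\mathbb{R}^{(p_2-r)\times r}$, $\|A_0\|_2<1$, and $M_0\in\mathbb{R}^{p_1\times r}$ of full column rank $r$. Then $D\Sigma(\theta_0)^TD\Sigma(\theta_0)$ is invertible and $$\|\{D\Sigma(\theta_0)^TD\Sigma(\theta_0)\}^{-1}\|_2\le\begin{cases}1+\dfrac{(1+8\|M_0\|_2^2)(1+\|A_0\|_2^2)^4}{4\sigma_r^2(M_0)(1-\|A_0\|_2^2)^2},& r\ge2,\\[2mm]1+\dfrac{(1+8\|M_0\|_2^2)(1+\|A_0\|_2^2)^2}{4\sigma_r^2(M_0)},& r=1.\end{cases}$$
   Context: Fix integers $r\le\min(p_1,p_2)$. For $A\in\mathbb{R}^{(p_2-r)\times r}$ write $\varphi=\mathrm{vec}(A)$, $X_\varphi=\begin{bmatrix}0_{r\times r}&-A^{T}\\ A&0\end{bmatrix}\in\mathbb{R}^{p_2\times p_2}$, $I_{p_2\times r}=\begin{bmatrix}I_r\\0\end{bmatrix}$, Cayley parameterization $U(\varphi)=(I_{p_2}+X_\varphi)(I_{p_2}-X_\varphi)^{-1}I_{p_2\times r}$ with derivative $DU(\varphi)=2[I_{p_2\times r}^T(I_{p_2}-X_\varphi)^{-T}\otimes(I_{p_2}-X_\varphi)^{-1}]\Gamma$, $\Gamma=(I_{p_2^2}-K_{p_2p_2})(\Theta_1^T\otimes\Theta_2^T)$, $\Theta_1=I_{p_2\times r}^T$, $\Theta_2=[0_{(p_2-r)\times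 r},I_{p_2-r}]$; $K_{pq}$ is the commutation matrix ($\mathrm{vec}(N^T)=K_{pq}\mathrm{vec}(N)$ for $N\in\mathbb{R}^{p\times q}$). For $\mu=\mathrm{vec}(M)$, $M\in\mathbb{R}^{p_1\times r}$, and $\theta=[\varphi^T,\mu^T]^T$, set $\Sigma(\theta)=MU(\varphi)^T\in\mathbb{R}^{p_1\times p_2}$, $D_\varphi\Sigma(\theta)=K_{p_2p_1}(M\otimes I_{p_2})DU(\varphi)$, $D_\mu\Sigma(\theta)=U(\varphi)\otimes I_{p_1}$, $D\Sigma(\theta)=[D_\varphi\Sigma(\theta),D_\mu\Sigma(\theta)]$. $\sigma_r(M_0)$ is the $r$-th (smallest) singular value of $M_0$. *)

From HB Require Import structures.
From mathcomp Require Import all_boot all_order all_algebra.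
From mathcomp Require Import classical_sets reals.
Set Implicit Arguments. Unset Strict Implicit. Unset Printing Implicit Defensive.
Import Order.TTheory GRing.Theory Num.Theory.
Local Open Scope ring_scope.
Local Open Scope classical_set_scope.

Section Defs.
Variable R : realType.

Definition vnorm n (x : 'cV[R]_n) : R := Num.sqrt (\sum_i (x i 0) ^+ 2).

Definition opnorm m n (A : 'M[R]_(m, n)) : R :=
  sup [set vnorm (A *m x) | x in [set x : 'cV[R]_n | vnorm x = 1]].

Definition sigma_min p r (M : 'M[R]_(p, r)) : R :=
  Num.sqrt (inf [set a : R | eigenvalue (M^T *m M) a]).

(* column-major vec: vec N : 'cV_(q*p) for N : 'M_(p,q); entry N i j sits at
   index mxvec_index j i = j*p + i *)
Definition vec p q (N : 'M[R]_(p, q)) : 'cV[R]_(q * p) := (mxvec N^T)^T.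

(* Kronecker product: (A (x) B)[(i,k),(j,l)] = A i j * B k l, with row index
   i*p+k and column index j*s+l *)
Definition kron m n p s (A : 'M[R]_(m, n)) (B : 'M[R]_(p, s)) : 'M[R]_(m * p, n * s) :=
  \matrix_(a, b) \sum_(i < m) \sum_(k < p) \sum_(j < n) \sum_(l < s)
     ((a == mxvec_index i k)%:R * (b == mxvec_index j l)%:R * A i j * B k l).

(* commutation matrix K_{pq}: vec (N^T) = K_{pq} vec N for N : 'M_(p,q) *)
Definition commat p q : 'M[R]_(p * q, q * p) :=
  \matrix_(a, b) \sum_(i < p) \sum_(j < q)
     ((a == mxvec_index i j)%:R * (b == mxvec_index j i)%:R).

(* Dimensions: p2 = r + q with q = p2 - r. *)
Variables (r q p1 : nat).

Definition Ipr : 'M[R]_(r + q, r) := col_mx 1%:M 0.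
Definition Theta1 : 'M[R]_(r, r + q) := Ipr^T.
Definition Theta2 : 'M[R]_(q, r + q) := row_mx 0 1%:M.

Definition Xphi (A : 'M[R]_(q, r)) : 'M[R]_(r + q) := block_mx 0 (- A^T) A 0.

Definition Ucay (A : 'M[R]_(q, r)) : 'M[R]_(r + q, r) :=
  (1%:M + Xphi A) *m invmx (1%:M - Xphi A) *m Ipr.

Definition Gam : 'M[R]_((r + q) * (r + q), r * q) :=
  (1%:M - commat (r + q) (r + q)) *m kron Theta1^T Theta2^T.

Definition DU (A : 'M[R]_(q, r)) : 'M[R]_(r * (r + q), r * q) :=
  2%:R *: (kron (Ipr^T *m (invmx (1%:M - Xphi A))^T) (invmx (1%:M - Xphi A)) *m Gam).

Definition DSigma_phi (A : 'M[R]_(q, r)) (M : 'M[R]_(p1, r)) :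
  'M[R]_((r + q) * p1, r * q) :=
  commat (r + q) p1 *m kron M (1%:M : 'M[R]_(r + q)) *m DU A.

Definition DSigma_mu (A : 'M[R]_(q, r)) : 'M[R]_((r + q) * p1, r * p1) :=
  kron (Ucay A) (1%:M : 'M[R]_p1).

Definition DSigma (A : 'M[R]_(q, r)) (M : 'M[R]_(p1, r)) :
  'M[R]_((r + q) * p1, r * q + r * p1) :=
  row_mx (DSigma_phi A M) (DSigma_mu A).

End Defs.

(* Write v = (vec Ad; vec Md). Differentiating the Cayley parameterisation gives
   DSigma v = vec ([M W1^T + Md, M W2^T] Q^T), where Q = (1 + X)(1 - X)^-1 is
   orthogonal and, with S = 1 + A^T A and T = 1 + A A^T,
     W1 = 2 S^-1 (A^T Ad - Ad^T A) S^-1,   W2 = 2 T^-1 (A Ad^T A + Ad) S^-1.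
   Hence |DSigma v|^2 = |M W1^T + Md|^2 + |M W2^T|^2 (Frobenius norms).
   Always |W1|^2 <= 4 |Ad|^2, and |W2|^2 >= w |Ad|^2 with
   w = 4 (1 - b^2)^2 / (1 + b^2)^4, or w = 4 / (1 + b^2)^2 when r = 1, where
   b = ||A||. Together with ||M|| = a and s^2 |z|^2 <= |M z|^2 (s = sigma_r(M)),
   a weighted triangle inequality yields |DSigma v|^2 >= k |v|^2 for
   k = s^2 w / (s^2 w + 1 + 8 a^2), whence DSigma^T DSigma is invertible with
   ||(DSigma^T DSigma)^-1|| <= 1/k = 1 + (1 + 8 a^2) / (s^2 w). *)

From HB Require Import structures.
From mathcomp Require Import all_boot all_order all_algebra.
From mathcomp Require Import boolp classical_sets reals.
From mathcomp Require Import ring lra zify.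
Import Order.TTheory GRing.Theory Num.Theory.
Set Implicit Arguments. Unset Strict Implicit. Unset Printing Implicit Defensive.
Local Open Scope ring_scope.

Lemma unitmx_of_inj (F : fieldType) n (H : 'M[F]_n) :
  (forall z : 'cV_n, H *m z = 0 -> z = 0) -> H \in unitmx.
Proof.
move=> Hinj; rewrite -unitmx_tr -row_free_unit; apply/inj_row_free => v hv.
apply: trmx_inj; rewrite trmx0; apply: Hinj.
by rewrite -[H]trmxK -trmx_mul hv trmx0.
Qed.

Lemma invmx_comm (F : comUnitRingType) n (P Q : 'M[F]_n) :
  P *m Q = Q *m P -> P \in unitmx -> Q \in unitmx ->
  invmx P *m invmx Q = invmx Q *m invmx P.
Proof.
move=> PQ uP uQ.
have QiP : invmx Q *m P = P *m invmx Q.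
  by rewrite -[LHS](mulmxK uQ) -(mulmxA (invmx Q)) PQ mulmxA mulVmx // mul1mx.
by rewrite -[LHS](mulmxK uP) -(mulmxA (invmx P)) QiP mulmxA mulVmx // mul1mx.
Qed.

Section Euclid.
Variable R : realType.

Definition dot n (x y : 'cV[R]_n) : R := (x^T *m y) 0 0.
Definition sqn n (x : 'cV[R]_n) : R := dot x x.

Lemma dotE n (x y : 'cV[R]_n) : dot x y = \sum_i x i 0 * y i 0.
Proof. by rewrite /dot mxE; apply: eq_bigr => i _; rewrite mxE. Qed.

Lemma dotC n (x y : 'cV[R]_n) : dot x y = dot y x.
Proof. by rewrite !dotE; apply: eq_bigr => i _; rewrite mulrC. Qed.

Lemma dotDr n (x y z : 'cV[R]_n) : dot x (y + z) = dot x y + dot x z.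
Proof. by rewrite /dot mulmxDr mxE. Qed.

Lemma dotDl n (x y z : 'cV[R]_n) : dot (y + z) x = dot y x + dot z x.
Proof. by rewrite dotC dotDr !(dotC x). Qed.

Lemma dotZr n a (x y : 'cV[R]_n) : dot x (a *: y) = a * dot x y.
Proof. by rewrite /dot -scalemxAr mxE. Qed.

Lemma dotZl n a (x y : 'cV[R]_n) : dot (a *: x) y = a * dot x y.
Proof. by rewrite dotC dotZr dotC. Qed.

Lemma dotNr n (x y : 'cV[R]_n) : dot x (- y) = - dot x y.
Proof. by rewrite -scaleN1r dotZr mulN1r. Qed.

Lemma dotNl n (x y : 'cV[R]_n) : dot (- x) y = - dot x y.
Proof. by rewrite dotC dotNr dotC. Qed.

Lemma dotBr n (x y z : 'cV[R]_n) : dot x (y - z) = dot x y - dot x z.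
Proof. by rewrite dotDr dotNr. Qed.

Lemma dot0r n (x : 'cV[R]_n) : dot x 0 = 0.
Proof. by rewrite /dot mulmx0 mxE. Qed.

Lemma dot_adj m n (L : 'M[R]_(m, n)) x y : dot (L *m x) y = dot x (L^T *m y).
Proof. by rewrite /dot trmx_mul mulmxA. Qed.

Lemma sqnE n (x : 'cV[R]_n) : sqn x = \sum_i x i 0 ^+ 2.
Proof. by rewrite /sqn dotE; apply: eq_bigr => i _; rewrite expr2. Qed.

Lemma sqn_ge0 n (x : 'cV[R]_n) : 0 <= sqn x.
Proof. by rewrite sqnE sumr_ge0 // => i _; rewrite sqr_ge0. Qed.

Lemma sqn_eq0 n (x : 'cV[R]_n) : sqn x = 0 -> x = 0.
Proof.
rewrite sqnE => /eqP; rewrite psumr_eq0 => [/allP H|i _]; last by rewrite sqr_ge0.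
apply/matrixP => i j; rewrite ord1 mxE.
by have /(_ (mem_index_enum i)) := H i; rewrite /= sqrf_eq0 => /eqP.
Qed.

Lemma sqn_gt0 n (x : 'cV[R]_n) : x != 0 -> 0 < sqn x.
Proof. by move=> nx; rewrite lt_def sqn_ge0 andbT; apply: contra nx => /eqP/sqn_eq0->. Qed.

Lemma sqn0 n : sqn (0 : 'cV[R]_n) = 0.
Proof. exact: dot0r. Qed.

Lemma sqnN n (x : 'cV[R]_n) : sqn (- x) = sqn x.
Proof. by rewrite /sqn dotNl dotNr opprK. Qed.

Lemma sqnZ n a (x : 'cV[R]_n) : sqn (a *: x) = a ^+ 2 * sqn x.
Proof. by rewrite /sqn dotZl dotZr mulrA -expr2. Qed.

Lemma sqnD n (x y : 'cV[R]_n) : sqn (x + y) = sqn x + 2%:R * dot x y + sqn y.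
Proof. by rewrite /sqn dotDl !dotDr (dotC y x); ring. Qed.

Lemma vnorm_sqn n (x : 'cV[R]_n) : vnorm x = Num.sqrt (sqn x).
Proof. by rewrite /vnorm sqnE. Qed.

Lemma sqn_normalize n (z : 'cV[R]_n) : z != 0 -> sqn ((Num.sqrt (sqn z))^-1 *: z) = 1.
Proof.
move=> zn; have zp := sqn_gt0 zn.
by rewrite sqnZ exprVn sqr_sqrtr ?mulVf // ?gt_eqF // ltW.
Qed.

Lemma dot_le n (y z : 'cV[R]_n) : 2%:R * dot y z <= sqn y + sqn z.
Proof. by have := sqn_ge0 (y - z); rewrite sqnD sqnN dotNr; lra. Qed.

Lemma dot_le4 n (u w : 'cV[R]_n) : dot u w <= sqn u + sqn w / 4%:R.
Proof.
have := dot_le u ((2%:R)^-1 *: w); rewrite dotZr sqnZ exprVn -natrX.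
by rewrite mulrA mulfV ?pnatr_eq0 // mul1r mulrC.
Qed.

Lemma quad_disc (a b c : R) : 0 <= c ->
  (forall t, 0 <= a + 2%:R * b * t + c * t ^+ 2) -> b ^+ 2 <= a * c.
Proof.
move=> c0 H; have a0 : 0 <= a by have := H 0; rewrite !mulr0 expr0n /= mulr0 !addr0.
have [cz|cp] := eqVneq c 0.
  have [bz|bn] := eqVneq b 0; first by rewrite bz cz expr0n /= mulr0.
  have := H (- (a + 1) / (2%:R * b)).
  rewrite cz mul0r addr0 mulrA mulrC mulrA mulVf ?mul1r; first lra.
  by rewrite mulf_eq0 negb_or bn pnatr_eq0.
have cg : 0 < c by rewrite lt_def cp c0.
have := H (- b / c).
have -> : a + 2%:R * b * (- b / c) + c * (- b / c) ^+ 2 = a - b ^+ 2 / c.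
  by field; rewrite cp.
by rewrite subr_ge0 ler_pdivrMr.
Qed.

Definition qform n (H : 'M[R]_n) (z : 'cV[R]_n) := dot z (H *m z).

Lemma qformZ n (H : 'M[R]_n) a z : qform H (a *: z) = a ^+ 2 * qform H z.
Proof. by rewrite /qform -scalemxAr dotZl dotZr mulrA -expr2. Qed.

Lemma psd_cauchy_schwarz n (H : 'M[R]_n) y z : H^T = H -> (forall w, 0 <= qform H w) ->
  dot y (H *m z) ^+ 2 <= qform H y * qform H z.
Proof.
move=> HT Hp; apply: quad_disc => [|t]; first exact: Hp.
have := Hp (y + t *: z); rewrite /qform mulmxDr -scalemxAr dotDl !dotDr !dotZl !dotZr.
have -> : dot z (H *m y) = dot y (H *m z) by rewrite dotC dot_adj HT.
by congr (0 <= _); ring.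
Qed.

Lemma cauchy_schwarz n (y z : 'cV[R]_n) : dot y z ^+ 2 <= sqn y * sqn z.
Proof.
have := @psd_cauchy_schwarz n 1%:M y z (trmx1 _ _).
by rewrite /qform !mul1mx; apply => w; rewrite mul1mx sqn_ge0.
Qed.

Lemma sqn_mul_bound m n (L : 'M[R]_(m, n)) :
  exists2 B, 0 <= B & forall z, sqn (L *m z) <= B * sqn z.
Proof.
exists (\sum_i sqn (row i L)^T); first by rewrite sumr_ge0 // => i _; exact: sqn_ge0.
move=> z; rewrite sqnE mulr_suml; apply: ler_sum => i _.
have -> : (L *m z) i 0 = dot (row i L)^T z.
  by rewrite dotE mxE; apply: eq_bigr => k _; rewrite !mxE.
exact: cauchy_schwarz.
Qed.

Lemma sqn_tr_bound c m n (L : 'M[R]_(m, n)) : 0 <= c ->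
  (forall z, sqn (L *m z) <= c * sqn z) -> forall w, sqn (L^T *m w) <= c * sqn w.
Proof.
move=> c0 hL w; set u := L^T *m w.
have [u0|un] := eqVneq (sqn u) 0; first by rewrite u0 mulr_ge0 ?sqn_ge0.
have up : 0 < sqn u by rewrite lt_def un sqn_ge0.
have cs : sqn u ^+ 2 <= sqn w * sqn (L *m u).
  have -> : sqn u = dot w (L *m u) by rewrite /sqn /u dot_adj trmxK.
  exact: cauchy_schwarz.
have : sqn u ^+ 2 <= (c * sqn w) * sqn u.
  apply: (le_trans cs); rewrite [c * _ * _]mulrAC [_ * sqn w]mulrC.
  by apply: ler_wpM2l; [exact: sqn_ge0 | exact: hL].
by rewrite expr2 ler_pM2r.
Qed.

(* With
   |H z|^2 <= B1 |z|^2 and |H^-1 y|^2 <= B2 |y|^2, Cauchy-Schwarz for the form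
   gives |H z|^4 <= q(z) q(H z) <= q(z) K |H z|^2 (K = (1 + B1)/2), hence
   |z|^2 <= B2 |H z|^2 <= B2 K q(z). *)
Lemma psd_unit_coercive n (H : 'M[R]_n) : H^T = H -> (forall w, 0 <= qform H w) ->
  H \in unitmx -> exists2 c, 0 < c & forall z, c * sqn z <= qform H z.
Proof.
move=> HT Hp Hu.
have [B1 B10 hB1] := sqn_mul_bound H.
have [B2 B20 hB2] := sqn_mul_bound (invmx H).
set K := (1 + B1) / 2%:R.
have K0 : 0 <= K by rewrite /K; lra.
have BK0 : 0 < B2 * K + 1 by nra.
exists (B2 * K + 1)^-1; first by rewrite invr_gt0.
move=> z; rewrite mulrC ler_pdivrMr //.
have qHz : qform H (H *m z) <= K * sqn (H *m z).
  have := dot_le (H *m z) (H *m (H *m z)); have := hB1 (H *m z); rewrite /qform /K; lra.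
have cs : sqn (H *m z) ^+ 2 <= qform H z * qform H (H *m z).
  by have := psd_cauchy_schwarz z (H *m z) HT Hp; rewrite dotC dot_adj HT.
have hz : sqn z <= B2 * sqn (H *m z) by rewrite -{1}(mulKmx Hu z) hB2.
have [e0|ne0] := eqVneq (sqn (H *m z)) 0.
  have -> : z = 0 by rewrite -(mulKmx Hu z) (sqn_eq0 e0) mulmx0.
  by rewrite sqn0 mulr_ge0 ?Hp // ltW.
have Hzp : 0 < sqn (H *m z) by rewrite lt_def ne0 sqn_ge0.
have Hzq : sqn (H *m z) <= K * qform H z.
  rewrite -(ler_pM2r Hzp) -expr2 mulrAC; apply: (le_trans cs).
  by rewrite mulrC ler_wpM2r ?Hp.
have := Hp z; nra.
Qed.

Lemma qform_sphere_bound n (H : 'M[R]_n) mu :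
  (forall x, sqn x = 1 -> mu <= qform H x) -> forall z, mu * sqn z <= qform H z.
Proof.
move=> h z; have [->|zn] := eqVneq z 0; first by rewrite sqn0 mulr0 /qform mulmx0 dot0r.
have := h _ (sqn_normalize zn); rewrite qformZ exprVn sqr_sqrtr ?sqn_ge0 // => h1.
by rewrite -ler_pdivlMr ?sqn_gt0 // mulrC.
Qed.

End Euclid.

Section OperatorNorm.
Variable R : realType.
Local Open Scope classical_set_scope.

Lemma vnorm1_sqn n (x : 'cV[R]_n) : vnorm x = 1 -> sqn x = 1.
Proof. by rewrite vnorm_sqn => h; rewrite -(sqr_sqrtr (sqn_ge0 x)) h expr1n. Qed.

Lemma opnorm_has_ub m n (A : 'M[R]_(m, n)) :
  has_ubound [set vnorm (A *m x) | x in [set x : 'cV[R]_n | vnorm x = 1]].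
Proof.
have [B B0 hB] := sqn_mul_bound A.
exists (Num.sqrt B) => _ [x /= /vnorm1_sqn hx <-].
by rewrite vnorm_sqn ler_sqrt // -[B]mulr1 -hx hB.
Qed.

Lemma opnorm_ge0 m n (A : 'M[R]_(m, n)) : 0 <= opnorm A.
Proof.
rewrite /opnorm; set S := [set _ | _ in _].
have [[e Se]|S0] := pselect (S !=set0); last first.
  by rewrite (_ : S = set0) ?sup0 //; apply/eqP; apply: contra_notT S0 => /set0P.
apply: le_trans (ub_le_sup (opnorm_has_ub A) Se).
by case: Se => x _ <-; rewrite vnorm_sqn sqrtr_ge0.
Qed.

Lemma opnorm_sqn m n (A : 'M[R]_(m, n)) z : sqn (A *m z) <= opnorm A ^+ 2 * sqn z.
Proof.
have [->|zn] := eqVneq z 0; first by rewrite mulmx0 !sqn0 mulr0.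
set s := Num.sqrt (sqn z); have zp := sqn_gt0 zn.
have sp : 0 < s by rewrite sqrtr_gt0.
have unit_in : vnorm (A *m (s^-1 *: z)) <= opnorm A.
  apply: ub_le_sup; first exact: opnorm_has_ub.
  by exists (s^-1 *: z) => //=; rewrite vnorm_sqn sqn_normalize ?sqrtr1.
rewrite -scalemxAr vnorm_sqn sqnZ sqrtrM ?sqr_ge0 // sqrtr_sqr ger0_norm in unit_in;
  last by rewrite invr_ge0 ltW.
rewrite ler_pdivrMl // mulrC in unit_in.
rewrite -(sqr_sqrtr (sqn_ge0 z)) -exprMn -(sqr_sqrtr (sqn_ge0 (A *m z))).
by rewrite lerXn2r // ?nnegrE ?sqrtr_ge0 // mulr_ge0 ?opnorm_ge0 ?sqrtr_ge0.
Qed.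

Lemma opnorm_le_bound m n (A : 'M[R]_(m, n)) K : 0 <= K ->
  (forall x, sqn x = 1 -> Num.sqrt (sqn (A *m x)) <= K) -> opnorm A <= K.
Proof.
move=> K0 hK; rewrite /opnorm; set S := [set _ | _ in _].
have [SN|S0] := pselect (S !=set0).
  by apply: ge_sup => // _ [x /= /vnorm1_sqn hx <-]; rewrite vnorm_sqn hK.
by rewrite (_ : S = set0) ?sup0 //; apply/eqP; apply: contra_notT S0 => /set0P.
Qed.

Lemma gram_inverse_opnorm m n (D : 'M[R]_(m, n)) (k : R) : 0 < k ->
  (forall v, k * sqn v <= sqn (D *m v)) ->
  (D^T *m D \in unitmx) /\ opnorm (invmx (D^T *m D)) <= k^-1.
Proof.
move=> k0 hk.
have qG v : qform (D^T *m D) v = sqn (D *m v) by rewrite /qform -mulmxA -dot_adj.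
have Gu : D^T *m D \in unitmx.
  apply: unitmx_of_inj => z hz; apply: sqn_eq0.
  have := hk z; rewrite -qG /qform hz dot0r pmulr_rle0 // => z0.
  by apply/eqP; rewrite eq_le z0 sqn_ge0.
split => //; apply: opnorm_le_bound; first by rewrite invr_ge0 ltW.
move=> x hx; set y := invmx _ *m x.
have hy : D^T *m D *m y = x by rewrite /y mulKVmx.
have lower : k * sqn y <= dot y x by have := hk y; rewrite -qG /qform hy.
have upper : dot y x ^+ 2 <= sqn y by have := cauchy_schwarz y x; rewrite hx mulr1.
have y_le : sqn y <= k^-2.
  have [->|yn] := eqVneq (sqn y) 0; first by rewrite invr_ge0 exprn_ge0 // ltW.
  have yp : 0 < sqn y by rewrite lt_def yn sqn_ge0.
  have sq : (k * sqn y) ^+ 2 <= sqn y.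
    by have := mulr_ge0 (ltW k0) (sqn_ge0 y); nra.
  have : k ^+ 2 * sqn y <= 1 by nra.
  by rewrite -[_^-1]mulr1 ler_pdivlMl ?exprn_gt0.
have ki0 : 0 <= k^-1 by rewrite invr_ge0 ltW.
by rewrite -(ger0_norm ki0) -sqrtr_sqr ler_sqrt ?sqr_ge0 // exprVn.
Qed.

End OperatorNorm.

Section Rayleigh.
Variable R : realType.
Local Open Scope classical_set_scope.
Variables (n : nat) (G : 'M[R]_n).
Hypotheses (GT : G^T = G) (Gpsd : forall w, 0 <= qform G w).

Definition rayleigh := [set qform G z | z in [set z : 'cV[R]_n | sqn z = 1]].

Lemma rayleigh_has_lb : has_lbound rayleigh.
Proof. by exists 0 => _ [z _ <-]. Qed.

Lemma rayleigh_inf_sqn z : inf rayleigh * sqn z <= qform G z.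
Proof. by apply: qform_sphere_bound => x hx; apply: ge_inf; [exact: rayleigh_has_lb | exists x]. Qed.

Lemma rayleigh_neq0 : (0 < n)%N -> rayleigh !=set0.
Proof.
move=> n0; set z := const_mx 1 : 'cV[R]_n.
have zn : z != 0.
  apply/negP => /eqP /matrixP /(_ (Ordinal n0) 0); rewrite !mxE => /eqP.
  by rewrite oner_eq0.
by exists (qform G ((Num.sqrt (sqn z))^-1 *: z)); exists ((Num.sqrt (sqn z))^-1 *: z);
  rewrite //= sqn_normalize.
Qed.

Lemma rayleigh_inf_le_eigenvalue a : eigenvalue G a -> inf rayleigh <= a.
Proof.
move=> /eigenvalueP [v hv vn].
have zn : v^T != 0 by apply: contraNneq vn => h; rewrite -[v]trmxK h trmx0.
have qv : qform G v^T = a * sqn v^T.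
  by rewrite /qform -{1}GT -trmx_mul hv linearZ /= /sqn dotZr.
by have := rayleigh_inf_sqn v^T; rewrite qv ler_pM2r ?sqn_gt0.
Qed.

(* ... and this infimum is itself an eigenvalue: otherwise G - inf I would
   be an invertible positive semidefinite matrix, hence coercive, which
   would raise the infimum. *)
Lemma rayleigh_inf_eigenvalue : (0 < n)%N -> eigenvalue G (inf rayleigh).
Proof.
move=> n0; set mu := inf rayleigh; set H := G - mu%:M.
have HT : H^T = H by rewrite /H linearB /= GT tr_scalar_mx.
have qH z : qform H z = qform G z - mu * sqn z.
  by rewrite /qform /H mulmxBl mul_scalar_mx dotBr dotZr.
have Hpsd w : 0 <= qform H w by rewrite qH subr_ge0 rayleigh_inf_sqn.
rewrite /eigenvalue /eigenspace kermx_eq0 row_free_unit -/H.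
apply/negP => Hu; have [c c0 hc] := psd_unit_coercive HT Hpsd Hu.
have : mu + c <= mu.
  apply: lb_le_inf; first exact: rayleigh_neq0.
  by move=> _ [x /= hx <-]; have := hc x; rewrite qH hx !mulr1; lra.
lra.
Qed.

Lemma inf_eigenvalues : (0 < n)%N -> inf [set a | eigenvalue G a] = inf rayleigh.
Proof.
move=> n0; have ev := rayleigh_inf_eigenvalue n0.
apply/eqP; rewrite eq_le; apply/andP; split.
  by apply: ge_inf => //; exists (inf rayleigh) => a /rayleigh_inf_le_eigenvalue.
by apply: lb_le_inf; [exists (inf rayleigh) | move=> a /rayleigh_inf_le_eigenvalue].
Qed.

End Rayleigh.

Section SmallestSingularValue.
Variable R : realType.
Variables (p r : nat) (M : 'M[R]_(p, r)).
Hypotheses (r0 : (0 < r)%N) (rkM : \rank M = r).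

Let G := M^T *m M.
Let GT : G^T = G. Proof. by rewrite /G trmx_mul trmxK. Qed.
Let qG z : qform G z = sqn (M *m z). Proof. by rewrite /qform /G /sqn dot_adj mulmxA. Qed.
Let Gpsd w : 0 <= qform G w. Proof. by rewrite qG sqn_ge0. Qed.

Lemma sigma_min_sqr : sigma_min M ^+ 2 = inf (rayleigh G).
Proof.
rewrite /sigma_min -/G inf_eigenvalues // sqr_sqrtr //.
by apply: lb_le_inf; [exact: rayleigh_neq0 | move=> _ [z _ <-]].
Qed.

Lemma sigma_min_sqn z : sigma_min M ^+ 2 * sqn z <= sqn (M *m z).
Proof. by rewrite sigma_min_sqr -qG rayleigh_inf_sqn. Qed.

(* Full column rank makes M^T M invertible, hence coercive. *)
Lemma sigma_min_gt0 : 0 < sigma_min M.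
Proof.
have Minj z : M *m z = 0 -> z = 0.
  move=> h; have rf : row_free M^T by rewrite /row_free mxrank_tr rkM.
  apply: trmx_inj; rewrite trmx0; apply: (row_free_inj rf).
  by rewrite -trmx_mul h trmx0 mul0mx.
have Gu : G \in unitmx.
  by apply: unitmx_of_inj => z hz; apply/Minj/sqn_eq0; rewrite -qG /qform hz dot0r.
have [c c0 hc] := psd_unit_coercive GT Gpsd Gu.
have hs : c <= sigma_min M ^+ 2.
  rewrite sigma_min_sqr; apply: lb_le_inf; first exact: rayleigh_neq0.
  by move=> _ [z /= hz <-]; rewrite -[c]mulr1 -hz hc.
have s_ge0 : 0 <= sigma_min M by exact: sqrtr_ge0.
rewrite lt_def s_ge0 andbT; apply: contraTneq hs => ->.
by rewrite expr0n /= -ltNge.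
Qed.

End SmallestSingularValue.

Section VecKron.
Variable R : realType.

Lemma mxvec_index_eq m n (i i' : 'I_m) (j j' : 'I_n) :
  (mxvec_index i j == mxvec_index i' j') = (i == i') && (j == j').
Proof. by rewrite /mxvec_index (inj_eq (@cast_ord_inj _ _ _)) (inj_eq enum_rank_inj). Qed.

Lemma sum_mxvec m n (F : 'I_(m * n) -> R) :
  \sum_k F k = \sum_i \sum_j F (mxvec_index i j).
Proof.
rewrite (reindex (uncurry (@mxvec_index m n))) /=; last first.
  by have [g h1 h2] := curry_mxvec_bij m n; exists g => x _; [apply: h1 | apply: h2].
by rewrite pair_big /=; apply: eq_bigr => -[i j] _.
Qed.

Lemma sum_delta n (i : 'I_n) (F : 'I_n -> R) : \sum_i' (i == i')%:R * F i' = F i.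
Proof.
rewrite (bigD1 i) //= eqxx mul1r big1 ?addr0 // => i' ne.
by rewrite eq_sym (negbTE ne) mul0r.
Qed.

Lemma kronE m n p s (A : 'M[R]_(m, n)) (B : 'M[R]_(p, s)) i k j l :
  kron A B (mxvec_index i k) (mxvec_index j l) = A i j * B k l.
Proof.
have split4 (b1 b2 b3 b4 : bool) (x y : R) : (b1 && b2)%:R * (b3 && b4)%:R * x * y =
    b1%:R * (b2%:R * (b3%:R * (b4%:R * (x * y)))).
  by case: b1; case: b2; case: b3; case: b4; rewrite /=; ring.
rewrite /kron mxE.
under eq_bigr => i' _ do under eq_bigr => k' _ do under eq_bigr => j' _ do
  under eq_bigr => l' _ do rewrite !mxvec_index_eq split4.
under eq_bigr => i' _ do under eq_bigr => k' _ do under eq_bigr => j' _ do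
  rewrite -mulr_sumr.
under eq_bigr => i' _ do under eq_bigr => k' _ do rewrite -mulr_sumr.
under eq_bigr => i' _ do rewrite -mulr_sumr.
rewrite sum_delta.
under eq_bigr => k' _ do under eq_bigr => j' _ do rewrite -mulr_sumr.
under eq_bigr => k' _ do rewrite -mulr_sumr.
rewrite sum_delta.
under eq_bigr => j' _ do rewrite -mulr_sumr.
by rewrite !sum_delta.
Qed.

Lemma vecE p q (N : 'M[R]_(p, q)) i j : vec N (mxvec_index j i) 0 = N i j.
Proof. by rewrite /vec mxE mxvecE mxE. Qed.

Lemma vecD p q (N P : 'M[R]_(p, q)) : vec (N + P) = vec N + vec P.
Proof. by rewrite /vec !linearD. Qed.

Lemma vecN p q (N : 'M[R]_(p, q)) : vec (- N) = - vec N.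
Proof. by rewrite /vec !linearN. Qed.

Lemma vecZ p q a (N : 'M[R]_(p, q)) : vec (a *: N) = a *: vec N.
Proof. by rewrite /vec !linearZ. Qed.

Lemma vec_surj p q (v : 'cV[R]_(q * p)) : vec ((vec_mx v^T)^T : 'M_(p, q)) = v.
Proof. by rewrite /vec trmxK vec_mxK trmxK. Qed.

Lemma vec_kron m n p s (A : 'M[R]_(m, n)) (B : 'M[R]_(p, s)) (N : 'M[R]_(s, n)) :
  kron A B *m vec N = vec (B *m N *m A^T).
Proof.
apply/matrixP => a z; rewrite ord1; case/mxvec_indexP: a => i k.
rewrite vecE mxE sum_mxvec mxE; apply: eq_bigr => j _.
rewrite mxE mxE mulr_suml; apply: eq_bigr => l _.
by rewrite kronE vecE; ring.
Qed.

Lemma commatE p q (i : 'I_p) (j : 'I_q) b :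
  commat R p q (mxvec_index i j) b = (b == mxvec_index j i)%:R.
Proof.
rewrite /commat mxE.
under eq_bigr => i' _ do under eq_bigr => j' _ do rewrite mxvec_index_eq.
rewrite (bigD1 i) //= [X in _ + X]big1 ?addr0; last first.
  by move=> i' ne; apply: big1 => j' _; rewrite eq_sym (negbTE ne) /= mul0r.
rewrite (bigD1 j) //= [X in _ + X]big1 ?addr0; last first.
  by move=> j' ne; rewrite eqxx eq_sym (negbTE ne) /= mul0r.
by rewrite !eqxx mul1r.
Qed.

Lemma vec_commat p q (N : 'M[R]_(p, q)) : commat R p q *m vec N = vec N^T.
Proof.
apply/matrixP => a z; rewrite ord1; case/mxvec_indexP: a => i j.
rewrite vecE mxE mxE sum_mxvec.
under eq_bigr => j' _ do under eq_bigr => i' _ do rewrite commatE mxvec_index_eq vecE.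
rewrite (bigD1 j) //= [X in _ + X]big1 ?addr0; last first.
  by move=> j' ne; apply: big1 => i' _; rewrite (negbTE ne) /= mul0r.
rewrite (bigD1 i) //= [X in _ + X]big1 ?addr0; last first.
  by move=> i' ne; rewrite eqxx (negbTE ne) /= mul0r.
by rewrite !eqxx mul1r.
Qed.

End VecKron.

Section Frobenius.
Variable R : realType.

Definition sqfrob m n (N : 'M[R]_(m, n)) : R := \sum_i \sum_j N i j ^+ 2.

Lemma sqn_vec p q (N : 'M[R]_(p, q)) : sqn (vec N) = sqfrob N.
Proof.
rewrite sqnE sum_mxvec exchange_big /=; apply: eq_bigr => i _; apply: eq_bigr => j _.
by rewrite vecE.
Qed.

Lemma sqfrob_tr m n (N : 'M[R]_(m, n)) : sqfrob N^T = sqfrob N.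
Proof. by rewrite /sqfrob exchange_big; apply: eq_bigr => i _; apply: eq_bigr => j _; rewrite mxE. Qed.

Lemma sqfrob_col m n (N : 'M[R]_(m, n)) : sqfrob N = \sum_j sqn (col j N).
Proof.
rewrite /sqfrob exchange_big; apply: eq_bigr => j _; rewrite sqnE.
by apply: eq_bigr => i _; rewrite mxE.
Qed.

Lemma sqfrob_ge0 m n (N : 'M[R]_(m, n)) : 0 <= sqfrob N.
Proof. by rewrite sqfrob_col sumr_ge0 // => j _; exact: sqn_ge0. Qed.

Lemma sqfrob_eq0 m n (N : 'M[R]_(m, n)) : sqfrob N = 0 -> N = 0.
Proof.
rewrite -sqn_vec => /sqn_eq0 h.
by rewrite -[N]trmxK -[N^T]mxvecK -[mxvec N^T]trmxK -/(vec N) h !linear0.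
Qed.

Lemma sqfrobZ a m n (N : 'M[R]_(m, n)) : sqfrob (a *: N) = a ^+ 2 * sqfrob N.
Proof. by rewrite -!sqn_vec vecZ sqnZ. Qed.

Lemma sqfrobN m n (N : 'M[R]_(m, n)) : sqfrob (- N) = sqfrob N.
Proof. by rewrite -!sqn_vec vecN sqnN. Qed.

Lemma sqfrob_row_mx m n1 n2 (P : 'M[R]_(m, n1)) (N : 'M[R]_(m, n2)) :
  sqfrob (row_mx P N) = sqfrob P + sqfrob N.
Proof.
rewrite !sqfrob_col big_split_ord /=.
by congr (_ + _); apply: eq_bigr => j _; rewrite ?colKl ?colKr.
Qed.

Lemma sqn_col_mx n1 n2 (u : 'cV[R]_n1) (d : 'cV[R]_n2) : sqn (col_mx u d) = sqn u + sqn d.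
Proof.
by rewrite !sqnE big_split_ord /=; congr (_ + _); apply: eq_bigr => j _; rewrite ?col_mxEu ?col_mxEd.
Qed.

Lemma col_mulmx m n p j (L : 'M[R]_(m, n)) (Z : 'M[R]_(n, p)) : col j (L *m Z) = L *m col j Z.
Proof. by rewrite !colE mulmxA. Qed.

Lemma sqfrob_mull_le c m n p (L : 'M[R]_(m, n)) (Z : 'M[R]_(n, p)) :
  (forall z, sqn (L *m z) <= c * sqn z) -> sqfrob (L *m Z) <= c * sqfrob Z.
Proof.
by move=> h; rewrite !sqfrob_col mulr_sumr; apply: ler_sum => j _; rewrite col_mulmx h.
Qed.

Lemma sqfrob_mull_ge c m n p (L : 'M[R]_(m, n)) (Z : 'M[R]_(n, p)) :
  (forall z, c * sqn z <= sqn (L *m z)) -> c * sqfrob Z <= sqfrob (L *m Z).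
Proof.
by move=> h; rewrite !sqfrob_col mulr_sumr; apply: ler_sum => j _; rewrite col_mulmx h.
Qed.

Lemma sqfrob_mulr_le c m n p (Z : 'M[R]_(m, n)) (L : 'M[R]_(n, p)) :
  (forall z, sqn (L^T *m z) <= c * sqn z) -> sqfrob (Z *m L) <= c * sqfrob Z.
Proof.
by move=> h; rewrite -(sqfrob_tr (Z *m L)) trmx_mul -(sqfrob_tr Z); apply: sqfrob_mull_le.
Qed.

Lemma sqfrob_mulr_ge c m n p (Z : 'M[R]_(m, n)) (L : 'M[R]_(n, p)) :
  (forall z, c * sqn z <= sqn (L^T *m z)) -> c * sqfrob Z <= sqfrob (Z *m L).
Proof.
by move=> h; rewrite -(sqfrob_tr (Z *m L)) trmx_mul -(sqfrob_tr Z); apply: sqfrob_mull_ge.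
Qed.

Lemma sqfrob_orth m n (Y : 'M[R]_(m, n)) (Q : 'M[R]_n) : Q^T *m Q = 1%:M ->
  sqfrob (Y *m Q^T) = sqfrob Y.
Proof.
move=> QTQ; have iso z : sqn (Q *m z) = sqn z.
  by rewrite /sqn dot_adj mulmxA QTQ mul1mx.
apply/eqP; rewrite eq_le; apply/andP; split.
  by rewrite -[X in _ <= X]mul1r; apply: sqfrob_mulr_le => z; rewrite trmxK iso mul1r.
by rewrite -[X in X <= _]mul1r; apply: sqfrob_mulr_ge => z; rewrite trmxK iso mul1r.
Qed.

Lemma sqfrob_addl_ge e m n (P N : 'M[R]_(m, n)) : 0 < e ->
  (1 - e) * sqfrob P + (1 - e^-1) * sqfrob N <= sqfrob (P + N).
Proof.
move=> e0; rewrite /sqfrob !mulr_sumr -big_split; apply: ler_sum => i _.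
rewrite !mulr_sumr -big_split; apply: ler_sum => j _; rewrite mxE -subr_ge0.
set x := P i j; set y := N i j.
have -> : (x + y) ^+ 2 - ((1 - e) * x ^+ 2 + (1 - e^-1) * y ^+ 2) = (e * x + y) ^+ 2 / e.
  by field; rewrite gt_eqF.
by rewrite divr_ge0 ?sqr_ge0 // ltW.
Qed.

Lemma sqfrob_add_le m n (P N : 'M[R]_(m, n)) :
  sqfrob (P + N) <= 2%:R * sqfrob P + 2%:R * sqfrob N.
Proof.
rewrite /sqfrob !mulr_sumr -big_split; apply: ler_sum => i _.
rewrite !mulr_sumr -big_split; apply: ler_sum => j _.
rewrite mxE -subr_ge0; set x := P i j; set y := N i j.
have -> : 2%:R * x ^+ 2 + 2%:R * y ^+ 2 - (x + y) ^+ 2 = (x - y) ^+ 2 by ring.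
exact: sqr_ge0.
Qed.

Lemma sqfrob_perturb m n (P U : 'M[R]_(m, n)) (be : R) : 0 <= be -> be <= 1 ->
  sqfrob U <= be ^+ 2 * sqfrob P -> (1 - be) ^+ 2 * sqfrob P <= sqfrob (P + U).
Proof.
move=> b0 b1 hU; have [bz|bn] := eqVneq be 0.
  rewrite bz expr0n /= mul0r in hU.
  have -> : U = 0 by apply: sqfrob_eq0; apply/eqP; rewrite eq_le hU sqfrob_ge0.
  by rewrite addr0 bz subr0 expr1n mul1r.
have bp : 0 < be by rewrite lt_def bn b0.
have hn : 1 - be^-1 <= 0 by rewrite subr_le0 invf_ge1.
have := ler_wnM2l hn hU.
have -> : (1 - be^-1) * (be ^+ 2 * sqfrob P) = (be ^+ 2 - be) * sqfrob P.
  by field; rewrite bn.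
have := sqfrob_addl_ge P U bp; have := sqfrob_ge0 P; nra.
Qed.

End Frobenius.

Section UnitLemmas.
Variable R : realType.

Lemma skew_qform n (X : 'M[R]_n) z : X^T = - X -> qform X z = 0.
Proof.
move=> XT; have : qform X z = - qform X z.
  by rewrite /qform -{2}[X]opprK -XT mulNmx dotNr opprK dotC dot_adj.
by move/eqP; rewrite -subr_eq0 opprK -mulr2n -mulr_natr mulf_eq0 pnatr_eq0 orbF => /eqP.
Qed.

Lemma skew_units n (X : 'M[R]_n) : X^T = - X ->
  (1%:M - X) \in unitmx /\ (1%:M + X) \in unitmx.
Proof.
move=> XT; split; apply: unitmx_of_inj => z hz; apply: sqn_eq0.
  have : qform (1%:M - X) z = 0 by rewrite /qform hz dot0r.
  by rewrite /qform mulmxBl mul1mx dotBr -/(qform X z) skew_qform // subr0.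
have : qform (1%:M + X) z = 0 by rewrite /qform hz dot0r.
by rewrite /qform mulmxDl mul1mx dotDr -/(qform X z) skew_qform // addr0.
Qed.

Lemma gram_unit m n (L : 'M[R]_(m, n)) : (1%:M + L^T *m L) \in unitmx.
Proof.
apply: unitmx_of_inj => z hz; apply: sqn_eq0.
have : dot z ((1%:M + L^T *m L) *m z) = 0 by rewrite hz dot0r.
rewrite mulmxDl mul1mx dotDr -mulmxA -dot_adj => h.
by have := sqn_ge0 z; have := sqn_ge0 (L *m z); rewrite /sqn in h *; lra.
Qed.

Lemma gram_sym m n (L : 'M[R]_(m, n)) : (invmx (1%:M + L^T *m L))^T = invmx (1%:M + L^T *m L).
Proof. by rewrite trmx_inv linearD /= trmx1 trmx_mul trmxK. Qed.

End UnitLemmas.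

Section Cayley.
Variable R : realType.
Variables (r q : nat) (A : 'M[R]_(q, r)).

Local Notation X := (Xphi A).
Local Notation C := (invmx (1%:M - Xphi A)).
Local Notation E := (invmx (1%:M + Xphi A)).
Local Notation Si := (invmx (1%:M + A^T *m A)).
Local Notation Ti := (invmx (1%:M + A *m A^T)).

Lemma Xphi_skew (B : 'M[R]_(q, r)) : (Xphi B)^T = - Xphi B.
Proof. by rewrite /Xphi tr_block_mx opp_block_mx !trmx0 !oppr0 linearN /= trmxK opprK. Qed.

Let Cu : (1%:M - X) \in unitmx. Proof. by have [] := skew_units (Xphi_skew A). Qed.
Let Eu : (1%:M + X) \in unitmx. Proof. by have [] := skew_units (Xphi_skew A). Qed.
Let Su : (1%:M + A^T *m A) \in unitmx. Proof. exact: gram_unit. Qed.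
Let Tu : (1%:M + A *m A^T) \in unitmx. Proof. by have := gram_unit A^T; rewrite trmxK. Qed.

Lemma push_through : A *m Si = Ti *m A.
Proof.
have h : A *m (1%:M + A^T *m A) = (1%:M + A *m A^T) *m A.
  by rewrite mulmxDr mulmxDl mulmx1 mul1mx mulmxA.
by rewrite -[RHS](mulmxK Su) -(mulmxA Ti) h mulKmx.
Qed.

Lemma push_through_tr : Si *m A^T = A^T *m Ti.
Proof.
apply: trmx_inj; rewrite !trmx_mul trmxK gram_sym push_through.
by have := gram_sym A^T; rewrite trmxK => ->.
Qed.

Lemma Si_gramE : Si *m A^T *m A = 1%:M - Si.
Proof.
have := mulVmx Su; rewrite mulmxDr mulmx1 => h.
by rewrite -mulmxA; apply/eqP; rewrite eq_sym subr_eq [_ + Si]addrC h.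
Qed.

Lemma Ti_gramE : Ti *m A *m A^T = 1%:M - Ti.
Proof.
have := mulVmx Tu; rewrite mulmxDr mulmx1 => h.
by rewrite -mulmxA; apply/eqP; rewrite eq_sym subr_eq [_ + Ti]addrC h.
Qed.

Lemma cayley_Ipr : C *m Ipr R r q = col_mx Si (A *m Si).
Proof.
suff h : (1%:M - X) *m col_mx Si (A *m Si) = Ipr R r q by rewrite -h mulKmx.
rewrite scalar_mx_block /Xphi opp_block_mx add_block_mx mul_block_col /Ipr.
rewrite !subr0 !sub0r opprK !mul1mx mulmxA -{1}[Si]mul1mx -!mulmxDl mulmxV //.
by rewrite addNr mul0mx.
Qed.

Definition cayley := (1%:M + X) *m C.

Lemma cayley_comm : (1%:M - X) *m (1%:M + X) = (1%:M + X) *m (1%:M - X).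
Proof.
have regroup (V : zmodType) (a b c : V) : a + b - (b + c) = a - b + (b - c).
  by rewrite opprD addrA addrK addrA subrK.
by rewrite mulmxBl mulmxDl !mulmxDr !mul1mx !mulmx1 !mulmxN regroup.
Qed.

Lemma cayley_orth : cayley^T *m cayley = 1%:M.
Proof.
rewrite /cayley trmx_mul trmx_inv linearB linearD /= trmx1 Xphi_skew opprK.
rewrite mulmxA -(mulmxA _ (1%:M - X)) cayley_comm mulmxA mulVmx // mul1mx.
by rewrite mulmxV.
Qed.

Variable Ad : 'M[R]_(q, r).

(* The two blocks of 2 E Xd C I_{p2 x r}, where E = (1 + X)^-1, C = (1 - X)^-1
   and Xd = X(Ad) is the skew direction: W1 is r x r, W2 is (p2 - r) x r. *)
Definition W1 := 2%:R *: (Si *m (A^T *m Ad - Ad^T *m A) *m Si).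
Definition W2 := 2%:R *: (Ti *m (A *m Ad^T *m A + Ad) *m Si).

Lemma W1E : W1 = 2%:R *: (Si *m A^T *m Ad *m Si - Si *m Ad^T *m A *m Si).
Proof. by rewrite /W1 mulmxBr mulmxBl !mulmxA. Qed.

Lemma W2E : W2 = 2%:R *: (Ti *m A *m Ad^T *m A *m Si + Ti *m Ad *m Si).
Proof. by rewrite /W2 mulmxDr mulmxDl !mulmxA. Qed.

Lemma AT_W2 : A^T *m W2 =
  2%:R *: (Ad^T *m A *m Si - Si *m Ad^T *m A *m Si + Si *m A^T *m Ad *m Si).
Proof.
rewrite /W2 -scalemxAr; congr (_ *: _).
by rewrite !mulmxA -push_through_tr mulmxDr mulmxDl !mulmxA Si_gramE !mulmxBl !mul1mx.
Qed.

Lemma A_W1 : A *m W1 =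
  2%:R *: (Ad *m Si - Ti *m Ad *m Si - Ti *m A *m Ad^T *m A *m Si).
Proof.
rewrite W1E -scalemxAr; congr (_ *: _).
by rewrite mulmxBr !mulmxA push_through Ti_gramE !mulmxBl !mul1mx.
Qed.

Lemma cayley_dir_blocks : 2%:R *: (E *m Xphi Ad *m C *m Ipr R r q) = col_mx W1 W2.
Proof.
suff key : (1%:M + X) *m col_mx W1 W2 = 2%:R *: (Xphi Ad *m (C *m Ipr R r q)).
  by rewrite -[RHS](mulKmx Eu) key -scalemxAr !mulmxA.
rewrite cayley_Ipr scalar_mx_block /Xphi add_block_mx !mul_block_col scale_col_mx.
rewrite !addr0 !add0r !mul1mx !mul0mx !add0r !addr0 !mulNmx.
congr col_mx.
  rewrite AT_W2 W1E -scalerBr mulmxA; congr (_ *: _).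
  by rewrite opprD opprB addrC addrA addrNK addrAC subrr add0r.
by rewrite A_W1 W2E -scalerDr -addrA addKr subrK.
Qed.

Lemma cayley_dir : cayley *m (2%:R *: (E *m Xphi Ad *m C *m Ipr R r q)) =
  2%:R *: (C *m Xphi Ad *m C *m Ipr R r q).
Proof.
have CE : C *m E = E *m C by apply: invmx_comm cayley_comm Cu Eu.
rewrite -scalemxAr /cayley; congr (_ *: _).
by rewrite !mulmxA -(mulmxA _ C E) CE mulmxA mulmxV // mul1mx.
Qed.

Lemma Gam_vec : Gam R r q *m vec Ad = vec (Xphi Ad).
Proof.
rewrite /Gam -mulmxA vec_kron mulmxBl mul1mx vec_commat -vecN -vecD; congr vec.
rewrite trmxK /Theta2 /Theta1 /Ipr tr_row_mx tr_col_mx !trmx0 !trmx1 mul_col_mx mul_col_row.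
rewrite !mul0mx !mul1mx !mulmx1 !mulmx0 tr_block_mx !trmx0 opp_block_mx add_block_mx /Xphi.
by rewrite !oppr0 !addr0 !add0r.
Qed.

Lemma DU_vec : DU A *m vec Ad = vec (2%:R *: (C *m Xphi Ad *m C *m Ipr R r q)).
Proof.
rewrite /DU -scalemxAl -mulmxA Gam_vec vec_kron vecZ.
by rewrite trmx_mul !trmxK !mulmxA.
Qed.

(* The key identity: D Sigma (vec Ad; vec Md) = vec ([M W1^T + Md, M W2^T] Q^T),
   so that, Q being orthogonal, |D Sigma v|^2 = |M W1^T + Md|^2 + |M W2^T|^2. *)
Lemma DSigma_vec p1 (M Md : 'M[R]_(p1, r)) :
  DSigma A M *m col_mx (vec Ad) (vec Md) = vec (row_mx (M *m W1^T + Md) (M *m W2^T) *m cayley^T).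
Proof.
rewrite /DSigma mul_row_col /DSigma_phi /DSigma_mu -!mulmxA DU_vec !vec_kron.
rewrite !mul1mx vec_commat -vecD; congr vec.
rewrite -cayley_dir cayley_dir_blocks /Ucay !trmx_mul !trmxK !mulmxA -!mulmxDl; congr (_ *m _).
rewrite /Ipr !tr_col_mx trmx1 trmx0 !mul_mx_row mulmx1 mulmx0 add_row_mx addr0.
by rewrite addrC.
Qed.

End Cayley.

Section GramInverse.
Variable R : realType.
Variables (m n : nat) (L : 'M[R]_(m, n)).
Local Notation S := (1%:M + L^T *m L).

Let S_qform y : dot y (S *m y) = sqn y + sqn (L *m y).
Proof. by rewrite mulmxDl mul1mx dotDr -mulmxA -dot_adj. Qed.

Lemma gram_inv_contr z : sqn (invmx S *m z) <= sqn z.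
Proof.
set y := invmx S *m z.
have hz : S *m y = z by rewrite /y mulKVmx // gram_unit.
have := S_qform y; rewrite hz => h.
by have := dot_le y z; have := sqn_ge0 (L *m y); lra.
Qed.

Lemma gram_inv_tr_half z : sqn (invmx S *m L^T *m z) <= sqn z / 4%:R.
Proof.
set y := invmx S *m L^T *m z.
have hz : S *m y = L^T *m z by rewrite /y -mulmxA mulKVmx // gram_unit.
have := S_qform y; rewrite hz -dot_adj => h.
by have := dot_le4 (L *m y) z; lra.
Qed.

Lemma gram_inv_lower (c : R) : 0 <= c -> (forall z, sqn (L *m z) <= c * sqn z) ->
  forall z, ((1 + c) ^+ 2)^-1 * sqn z <= sqn (invmx S *m z).
Proof.
move=> c0 hL z; set y := invmx S *m z.
have hLT := sqn_tr_bound c0 hL.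
have hz : S *m y = z by rewrite /y mulKVmx // gram_unit.
have expand : sqn z = sqn y + 2%:R * sqn (L *m y) + sqn (L^T *m (L *m y)).
  by rewrite -hz mulmxDl mul1mx sqnD -mulmxA -dot_adj.
have h1 := hL y; have h2 := hLT (L *m y).
have : sqn z <= (1 + c) ^+ 2 * sqn y.
  by rewrite expand; have := sqn_ge0 y; have := sqn_ge0 (L *m y); nra.
by rewrite ler_pdivrMl // exprn_gt0 //; lra.
Qed.

End GramInverse.

Section DirectionBounds.
Variable R : realType.
Variables (r q : nat) (A : 'M[R]_(q, r)).
(* |W1|^2 <= 4 |Ad|^2, from the two factors 2 S^-1 A^T Ad S^-1 and
   2 S^-1 Ad^T A S^-1, each of norm at most |Ad|/2 ... *)
Lemma W1_bound Ad : sqfrob (W1 A Ad) <= 4%:R * sqfrob Ad.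
Proof.
rewrite W1E sqfrobZ.
set Si := invmx _.
have hP : sqfrob (Si *m A^T *m Ad *m Si) <= 4%:R^-1 * sqfrob Ad.
  apply: le_trans (sqfrob_mulr_le (c := 1) _ _) _.
    by move=> z; rewrite gram_sym mul1r gram_inv_contr.
  by rewrite mul1r; apply: sqfrob_mull_le => z; rewrite mulrC gram_inv_tr_half.
have hN : sqfrob (Si *m Ad^T *m A *m Si) <= 4%:R^-1 * sqfrob Ad.
  rewrite -mulmxA; apply: le_trans (sqfrob_mulr_le (c := 4%:R^-1) _ _) _.
    by move=> z; rewrite trmx_mul gram_sym mulrC gram_inv_tr_half.
  rewrite -(sqfrob_tr Ad); apply: ler_wpM2l; first by rewrite invr_ge0.
  by rewrite -[X in _ <= X]mul1r; apply: sqfrob_mull_le => z; rewrite mul1r gram_inv_contr.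
have := sqfrob_add_le (Si *m A^T *m Ad *m Si) (- (Si *m Ad^T *m A *m Si)).
rewrite sqfrobN -natrX; have := sqfrob_ge0 Ad; nra.
Qed.

Variable b2 : R.
Hypotheses (b20 : 0 <= b2) (hA : forall z, sqn (A *m z) <= b2 * sqn z).

Let hAT := sqn_tr_bound b20 hA.

(* ... and, when b2 = ||A||^2 <= 1, |W2|^2 >= 4 (1-b2)^2/(1+b2)^4 |Ad|^2:
   A Ad^T A is a perturbation of Ad of relative size b2, and both
   (1 + A A^T)^-1 and (1 + A^T A)^-1 shrink by at most 1/(1+b2). *)
Lemma W2_bound Ad : b2 <= 1 ->
  4%:R * (1 - b2) ^+ 2 / (1 + b2) ^+ 4 * sqfrob Ad <= sqfrob (W2 A Ad).
Proof.
move=> b21; set V := A *m Ad^T *m A + Ad.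
have V_lower : (1 - b2) ^+ 2 * sqfrob Ad <= sqfrob V.
  rewrite /V [_ + Ad]addrC; apply: sqfrob_perturb => //.
  apply: le_trans (sqfrob_mulr_le (c := b2) _ _) _; first exact: hAT.
  rewrite expr2 -mulrA; apply: ler_wpM2l => //.
  by rewrite -(sqfrob_tr Ad); apply: sqfrob_mull_le.
have b2p : 0 < 1 + b2 by rewrite ltr_pwDl.
set u := ((1 + b2) ^+ 2)^-1.
have u0 : 0 <= u by rewrite invr_ge0 sqr_ge0.
set Ti := invmx (1%:M + A *m A^T); set Si := invmx (1%:M + A^T *m A).
have shrink_r : u * sqfrob (Ti *m V) <= sqfrob (Ti *m V *m Si).
  by apply: sqfrob_mulr_ge => z; rewrite gram_sym; exact: gram_inv_lower b20 hA z.
have shrink_l : u * sqfrob V <= sqfrob (Ti *m V).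
  by apply: sqfrob_mull_ge => z; have := gram_inv_lower b20 hAT z; rewrite trmxK.
have shrink := le_trans (ler_wpM2l u0 shrink_l) shrink_r.
rewrite /W2 sqfrobZ -natrX.
have -> : 4%:R * (1 - b2) ^+ 2 / (1 + b2) ^+ 4 * sqfrob Ad =
    4%:R * (u * (u * ((1 - b2) ^+ 2 * sqfrob Ad))).
  by rewrite /u; field; rewrite gt_eqF.
apply: ler_wpM2l => //; apply: le_trans shrink.
by apply: ler_wpM2l => //; apply: ler_wpM2l.
Qed.

(* For r = 1 the 1 x 1 matrix Ad^T A is symmetric, so A Ad^T A + Ad = T Ad
   and W2 = 2 Ad S^-1, which gives the sharper bound |W2|^2 >= 4/(1+b2)^2 |Ad|^2. *)
Lemma W2_bound_rank1 Ad : (r <= 1)%N -> 4%:R / (1 + b2) ^+ 2 * sqfrob Ad <= sqfrob (W2 A Ad).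
Proof.
move=> r1; rewrite /W2.
have sym : Ad^T *m A = A^T *m Ad.
  rewrite -[RHS]trmxK trmx_mul trmxK; apply/matrixP => i j; rewrite [RHS]mxE.
  by have -> : i = j by apply: ord_inj; have := ltn_ord i; have := ltn_ord j; lia.
rewrite -(mulmxA A) sym mulmxA.
rewrite (_ : A *m A^T *m Ad + Ad = (1%:M + A *m A^T) *m Ad); last by rewrite mulmxDl mul1mx addrC.
rewrite mulmxA mulVmx ?mul1mx; last by have := gram_unit A^T; rewrite trmxK.
rewrite sqfrobZ -natrX -mulrA; apply: ler_wpM2l => //.
by apply: sqfrob_mulr_ge => z; rewrite gram_sym; exact: gram_inv_lower.
Qed.

End DirectionBounds.

Section LowerBound.
Variable R : realType.

(* With x = |Ad|^2, y = |Md|^2,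
   F1 = |M W1^T|^2, F = |M W1^T + Md|^2, G = |M W2^T|^2, g = s^2 w and
   c = 1 + 8 a^2: if F1 <= 4 a^2 x, G >= g x and F >= k y - (g/c) F1 with
   k = g/(g+c), then F + G >= k (x + y). *)
Lemma lower_bound_arith (g a2 x y F1 F G : R) : 0 < g -> 0 <= a2 -> 0 <= x -> 0 <= y ->
  let c := 1 + 8%:R * a2 in
  0 <= F1 -> F1 <= 4%:R * a2 * x -> g * x <= G ->
  g / (g + c) * y - g / c * F1 <= F -> g / (g + c) * (x + y) <= F + G.
Proof.
move=> g0 a0 x0 y0 c F10 F1b Gb hF.
have c0 : 0 < c by rewrite /c; lra.
set k := g / (g + c); set t := g / c; rewrite -/k -/t in hF.
have t0 : 0 <= t by rewrite /t divr_ge0 // ltW.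
have kt : k <= t.
  by rewrite /k /t ler_wpM2l ?(ltW g0) // lef_pV2 ?posrE //; lra.
have tc : t * c = g by rewrite /t mulfVK ?gt_eqF.
have h1 : t * F1 <= t * (4%:R * a2 * x) by apply: ler_wpM2l.
have h2 : t * (1 + 4%:R * a2) <= g by rewrite -tc ler_wpM2l // /c; lra.
have h3 : (k + 4%:R * a2 * t) * x <= g * x.
  by apply: ler_wpM2r => //; apply: le_trans h2; lra.
nra.
Qed.

Variables (r q p1 : nat) (A : 'M[R]_(q, r)) (M : 'M[R]_(p1, r)) (a s w : R).
Hypotheses (s0 : 0 < s) (w0 : 0 < w)
  (hM : forall z, sqn (M *m z) <= a ^+ 2 * sqn z)
  (hs : forall z, s ^+ 2 * sqn z <= sqn (M *m z))
  (hW1 : forall Ad, sqfrob (W1 A Ad) <= 4%:R * sqfrob Ad)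
  (hW2 : forall Ad, w * sqfrob Ad <= sqfrob (W2 A Ad)).

Lemma DSigma_lower_bound v :
  s ^+ 2 * w / (s ^+ 2 * w + (1 + 8%:R * a ^+ 2)) * sqn v <= sqn (DSigma A M *m v).
Proof.
rewrite -[v]vsubmxK -(vec_surj (usubmx v)) -(vec_surj (dsubmx v)).
set Ad := (vec_mx (usubmx v)^T)^T; set Md := (vec_mx (dsubmx v)^T)^T.
rewrite DSigma_vec sqn_vec sqfrob_orth ?cayley_orth // sqfrob_row_mx sqn_col_mx !sqn_vec.
set g := s ^+ 2 * w; set c := 1 + 8%:R * a ^+ 2.
have g0 : 0 < g by rewrite mulr_gt0 // exprn_gt0.
have a0 : 0 <= a ^+ 2 := sqr_ge0 a.
have c0 : 0 < c by rewrite /c; lra.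
apply: (@lower_bound_arith g _ _ _ (sqfrob (M *m (W1 A Ad)^T))); rewrite ?sqfrob_ge0 //.
- apply: le_trans (sqfrob_mull_le _ hM) _.
  by rewrite (sqfrob_tr (W1 A Ad)) -mulrA mulrCA; apply: ler_wpM2l.
- apply: le_trans _ (sqfrob_mull_ge _ hs).
  by rewrite (sqfrob_tr (W2 A Ad)) /g -mulrA; apply: ler_wpM2l; rewrite ?sqr_ge0.
- have e0 : 0 < c / (g + c) by rewrite divr_gt0 //; lra.
  have := sqfrob_addl_ge Md (M *m (W1 A Ad)^T) e0; rewrite [Md + _]addrC -/c.
  have -> : 1 - c / (g + c) = g / (g + c) by field; rewrite gt_eqF //; lra.
  have -> : 1 - (c / (g + c))^-1 = - (g / c) by field; rewrite !gt_eqF //; lra.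
  by rewrite mulNr.
Qed.

Lemma DSigma_gram_bound :
  let D := DSigma A M in
  (D^T *m D \in unitmx) /\
  opnorm (invmx (D^T *m D)) <= 1 + (1 + 8%:R * a ^+ 2) / (s ^+ 2 * w).
Proof.
move=> D; set g := s ^+ 2 * w; set c := 1 + 8%:R * a ^+ 2.
have g0 : 0 < g by rewrite mulr_gt0 // exprn_gt0.
have c0 : 0 < c by have := sqr_ge0 a; rewrite /c; lra.
have k0 : 0 < g / (g + c) by rewrite divr_gt0 //; lra.
suff <- : (g / (g + c))^-1 = 1 + c / g by exact: gram_inverse_opnorm DSigma_lower_bound.
by rewrite invf_div; field; rewrite gt_eqF.
Qed.

End LowerBound.

Theorem theorem8 (R : realType) (p1 p2 r : nat)
  (hr0 : (0 < r)%N) (hr1 : (r <= p1)%N) (hr2 : (r <= p2)%N)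
  (A0 : 'M[R]_(p2 - r, r)) (M0 : 'M[R]_(p1, r))
  (hA0 : opnorm A0 < 1) (hM0 : \rank M0 = r) :
  let D := DSigma A0 M0 in
  let a := opnorm M0 in
  let b := opnorm A0 in
  let s := sigma_min M0 in
  (D^T *m D \in unitmx) /\
  opnorm (invmx (D^T *m D)) <=
    (if (2 <= r)%N then
       1 + (1 + 8%:R * a ^+ 2) * (1 + b ^+ 2) ^+ 4
           / (4%:R * s ^+ 2 * (1 - b ^+ 2) ^+ 2)
     else
       1 + (1 + 8%:R * a ^+ 2) * (1 + b ^+ 2) ^+ 2 / (4%:R * s ^+ 2)).
Proof.
move=> D a b s.
have b0 : 0 <= b := opnorm_ge0 A0.
have b21 : b ^+ 2 < 1 by rewrite -(expr1n _ 2) ltrXn2r //; lra.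
have b20 := sqr_ge0 b.
have hA : forall z, sqn (A0 *m z) <= b ^+ 2 * sqn z := opnorm_sqn A0.
have hM : forall z, sqn (M0 *m z) <= a ^+ 2 * sqn z := opnorm_sqn M0.
have s0 : 0 < s := sigma_min_gt0 hr0 hM0.
have hs := sigma_min_sqn M0 hr0.
have [bp bm] : 0 < 1 + b ^+ 2 /\ 0 < 1 - b ^+ 2 by split; lra.
case: ifP => hr.
  set w := 4%:R * (1 - b ^+ 2) ^+ 2 / (1 + b ^+ 2) ^+ 4.
  have w0 : 0 < w by rewrite /w !mulr_gt0 ?invr_gt0 ?exprn_gt0.
  have [Du Dn] := DSigma_gram_bound s0 w0 hM hs (W1_bound A0) (W2_bound b20 hA ^~ (ltW b21)).
  split=> //; apply: le_trans Dn _; rewrite lerD2l le_eqVlt; apply/orP; left.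
  by apply/eqP; rewrite /w; field; rewrite !gt_eqF.
set w := 4%:R / (1 + b ^+ 2) ^+ 2.
have w0 : 0 < w by rewrite /w mulr_gt0 ?invr_gt0 ?exprn_gt0.
have r1 : (r <= 1)%N by rewrite leqNgt hr.
have [Du Dn] := DSigma_gram_bound s0 w0 hM hs (W1_bound A0) (W2_bound_rank1 b20 hA ^~ r1).
split=> //; apply: le_trans Dn _; rewrite lerD2l le_eqVlt; apply/orP; left.
by apply/eqP; rewrite /w; field; rewrite !gt_eqF.
Qed.
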